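(* Let $w\in S_n$ be minimal non-separable. If $w(1)<w(n)$, then $w(i)>w(n)$ for $2\leq i\leq n+1-w(n)$; $w(1)<w(i)<w(n)$ for $n+2-w(n)\leq i\leq n-w(1)$; and $w(i)<w(1)$ for $n-w(1)+1\leq i\leq n-1$. Likewise, if $w(1)>w(n)$, then $w(i)<w(n)$ for $2\leq i\leq w(n)$; $w(n)<w(i)<w(1)$ for $w(n)+1\leq i\leq w(1)-1$; and $w(i)>w(1)$ for $w(1)\leq i\leq n-1$.
   Context: A permutation $w\in S_n$ is separable if it avoids the patterns $3142$ and $2413$: there are no indices $i_1<i_2<i_3<i_4$ such that $w(i_1)w(i_2)w(i_3)w(i_4)$ is in the same relative order as $3142$ or $2413$. For $J\subsetneq\{1,\dots,n-1\}$ (indexing the adjacent transpositions $s_i=(i,i+1)$), partition $\{1,\dots,n\}$ into maximal blocks of consecutive positions where $i$ and $i+1$ lie in the same block iff $i\in J$; $w_J$ (the component of $w$ in the parabolic subgroup $W_J$ in the factorization $w=w^Jw_J$) is separable iff for each block, the sequence of values of $w$ on that block, standardized to a permutation, is separable. $w$ is minimal non-separable if $w$ is not separable but $w_J$ is separable for every $J\subsetneq\{1,\dots,n-1\}$. *)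

From mathcomp Require Import all_boot all_fingroup.
Set Implicit Arguments. Unset Strict Implicit. Unset Printing Implicit Defensive.

Definition wseq (n : nat) (w : 'S_n) : seq nat := [seq (w i).+1 | i <- enum 'I_n].

(* w(i) for 1-based position i (1 <= i <= n). *)
Definition wv (n : nat) (w : 'S_n) (i : nat) : nat := nth 0 (wseq w) i.-1.

(* A sequence avoids 3142 and 2413 (0-based positions into s). *)
Definition separable (s : seq nat) : Prop :=
  ~ exists i1 i2 i3 i4 : nat,
      [/\ i1 < i2, i2 < i3, i3 < i4 & i4 < size s] /\
      (let a := nth 0 s i1 in let b := nth 0 s i2 in
       let c := nth 0 s i3 in let d := nth 0 s i4 in
       (b < d < a /\ a < c)        (* 3142 *)
       \/ (c < a < d /\ d < b)).   (* 2413 *)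

Definition std (s : seq nat) : seq nat :=
  [seq (count (fun y => y < x) s).+1 | x <- s].

(* Position p (1 <= p <= n-1), i.e. the transposition s_p, belongs to J,
   where J : {set 'I_n.-1} and j : 'I_n.-1 encodes s_(j+1). *)
Definition inJ (n : nat) (J : {set 'I_n.-1}) (p : nat) : bool :=
  [exists j : 'I_n.-1, (j \in J) && (j.+1 == p)].

Definition is_block (n : nat) (J : {set 'I_n.-1}) (a b : nat) : Prop :=
  [&& 1 <= a, a <= b, b <= n,
      (a == 1) || ~~ inJ J a.-1 &
      (b == n) || ~~ inJ J b] /\
  (forall p, a <= p < b -> inJ J p).

Definition wblock (n : nat) (w : 'S_n) (a b : nat) : seq nat :=
  [seq wv w i | i <- iota a (b.+1 - a)].

Definition parabolic_separable (n : nat) (w : 'S_n) (J : {set 'I_n.-1}) : Prop :=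
  forall a b, is_block J a b -> separable (std (wblock w a b)).

Definition min_nonseparable (n : nat) (w : 'S_n) : Prop :=
  ~ separable (wseq w) /\
  forall J : {set 'I_n.-1}, J != setT -> parabolic_separable w J.

From mathcomp Require Import all_boot all_fingroup.
From mathcomp Require Import zify.
From Stdlib Require Import Classical_Prop.
Set Implicit Arguments. Unset Strict Implicit. Unset Printing Implicit Defensive.

(* An occurrence of 3142 or 2413 in a minimal non-separable w must use both
   the first and the last position: otherwise it lies in the block [2, n] or
   [1, n - 1] of the parabolic subgroup obtained by dropping s_1 or s_(n-1).
   Suppose w(1) < w(n) and call an interior value big, middle or small when it
   lies above w(n), between w(1) and w(n), or below w(1).  The occurrence is
   then a 2413 reading w(1), big, small, w(n), and playing any interior
   position against it shows that no small or middle value precedes a big one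
   and no small value precedes a middle one.  Hence the interior reads big,
   then middle, then small; as there are n - w(n) big and w(1) - 1 small
   values, the three windows follow.  The case w(1) > w(n) reduces to this one
   by the complement w(i) |-> n + 1 - w(i). *)

Definition forbidden (a b c d : nat) : Prop :=
  (b < d < a /\ a < c) \/ (c < a < d /\ d < b).

Definition pattern_at (f : nat -> nat) (p1 p2 p3 p4 : nat) : Prop :=
  [&& p1 < p2, p2 < p3 & p3 < p4] /\ forbidden (f p1) (f p2) (f p3) (f p4).

Definition has_pattern (n : nat) (f : nat -> nat) : Prop :=
  exists p1 p2 p3 p4, [/\ 1 <= p1, p4 <= n & pattern_at f p1 p2 p3 p4].

Definition patterns_span (n : nat) (f : nat -> nat) : Prop :=
  forall p1 p2 p3 p4, 1 <= p1 -> p4 <= n -> pattern_at f p1 p2 p3 p4 ->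
  p1 = 1 /\ p4 = n.

Definition complement (n : nat) (f : nat -> nat) (i : nat) : nat := n.+1 - f i.

Lemma sub_in_count (T : eqType) (a1 a2 : pred T) (s : seq T) :
  {in s, subpred a1 a2} -> count a1 s <= count a2 s.
Proof.
elim: s => //= x s IH sub12; apply: leq_add.
  by case a1x: (a1 x); rewrite // sub12 ?mem_head.
by apply: IH => y ys; apply: sub12; rewrite inE ys orbT.
Qed.

Lemma count_iota_range m k lo hi : m <= lo <= hi -> hi <= m + k ->
  count (fun y => lo <= y < hi) (iota m k) = hi - lo.
Proof.
move=> /andP[m_lo lo_hi] hi_le.
have -> : k = (lo - m) + ((hi - lo) + (m + k - hi)) by lia.
rewrite !iotaD !count_cat subnKC // subnKC //.
rewrite (@eq_in_count _ _ pred0) => [|y]; last by rewrite mem_iota /=; lia.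
rewrite [count _ (iota hi _)](@eq_in_count _ _ pred0) => [|y]; last first.
  by rewrite mem_iota /=; lia.
rewrite [count _ (iota lo _)](@eq_in_count _ _ predT) => [|y]; last first.
  by rewrite mem_iota /=; lia.
by rewrite !count_pred0 count_predT size_iota addn0.
Qed.

Lemma map_uniq_inj_in (T1 T2 : eqType) (f : T1 -> T2) (s : seq T1) :
  uniq (map f s) -> {in s &, injective f}.
Proof.
elim: s => //= z s IH /andP[fz_notin uniq_fs] x y.
rewrite !inE => /predU1P[->|xs] /predU1P[->|ys] // fxy.
- by rewrite fxy map_f in fz_notin.
- by rewrite -fxy map_f in fz_notin.
- exact: IH.
Qed.

Lemma map_subn_iota n : map (subn n.+1) (iota 1 n) = rev (iota 1 n).
Proof.
apply: (@eq_from_nth _ 0); first by rewrite size_map size_rev.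
rewrite size_map size_iota => k lt_k.
by rewrite (nth_map 0) ?size_iota // nth_rev ?size_iota // !nth_iota //; lia.
Qed.

Section IotaPerm.

Variables (n : nat) (f : nat -> nat).
Hypothesis f_perm : perm_eq (map f (iota 1 n)) (iota 1 n).

Lemma iota_perm_range x : 1 <= x <= n -> 1 <= f x <= n.
Proof.
move=> x_in; have : f x \in iota 1 n.
  by rewrite -(perm_mem f_perm) map_f // mem_iota; lia.
by rewrite mem_iota; lia.
Qed.

Lemma iota_perm_inj x y : 1 <= x <= n -> 1 <= y <= n -> f x = f y -> x = y.
Proof.
have f_inj := map_uniq_inj_in (etrans (perm_uniq f_perm) (iota_uniq 1 n)).
by move=> x_in y_in; apply: f_inj; rewrite mem_iota; lia.
Qed.

Lemma iota_perm_count (P : pred nat) :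
  count (fun x => P (f x)) (iota 1 n) = count P (iota 1 n).
Proof. by rewrite -[RHS](seq.permP f_perm) count_map. Qed.

Lemma count_iota_perm_gt v : v <= n -> count (fun x => v < f x) (iota 1 n) = n - v.
Proof.
move=> v_le; rewrite (iota_perm_count (fun y => v < y)).
rewrite (@eq_in_count _ _ (fun y => v.+1 <= y < n.+1)) => [|y]; last first.
  by rewrite mem_iota; lia.
by rewrite count_iota_range //; lia.
Qed.

Lemma count_iota_perm_lt v : 1 <= v <= n.+1 ->
  count (fun x => f x < v) (iota 1 n) = v - 1.
Proof.
move=> v_in; rewrite (iota_perm_count (fun y => y < v)).
rewrite (@eq_in_count _ _ (fun y => 1 <= y < v)) => [|y]; last first.
  by rewrite mem_iota; lia.
by rewrite count_iota_range //; lia.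
Qed.

Lemma complement_perm : perm_eq (map (complement n f) (iota 1 n)) (iota 1 n).
Proof.
have -> : map (complement n f) (iota 1 n) = map (subn n.+1) (map f (iota 1 n)).
  by rewrite -map_comp.
by apply: perm_trans (perm_map _ f_perm) _; rewrite map_subn_iota perm_rev.
Qed.

Lemma pattern_at_complement p1 p2 p3 p4 : 1 <= p1 -> p4 <= n ->
  pattern_at (complement n f) p1 p2 p3 p4 <-> pattern_at f p1 p2 p3 p4.
Proof.
move=> p1_ge p4_le; rewrite /pattern_at /forbidden /complement.
have range x : p1 <= x <= p4 -> f x <= n by move=> x_in; have := @iota_perm_range x; lia.
have := range p1; have := range p2; have := range p3; have := range p4.
split=> -[ord pat]; split=> //; lia.
Qed.

Lemma has_pattern_complement : has_pattern n f -> has_pattern n (complement n f).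
Proof.
move=> [p1 [p2 [p3 [p4 [p1_ge p4_le pat]]]]].
by exists p1, p2, p3, p4; split; rewrite ?pattern_at_complement.
Qed.

Lemma patterns_span_complement : patterns_span n f -> patterns_span n (complement n f).
Proof.
move=> span p1 p2 p3 p4 p1_ge p4_le pat.
exact: span p1_ge p4_le (iffLR (@pattern_at_complement p1 p2 p3 p4 p1_ge p4_le) pat).
Qed.

End IotaPerm.

Section AscendingShape.

Variables (n : nat) (f : nat -> nat).
Hypotheses (f_perm : perm_eq (map f (iota 1 n)) (iota 1 n))
           (f_span : patterns_span n f).

Local Notation a := (f 1).
Local Notation d := (f n).

Lemma no_pattern_after_first p1 p2 p3 p4 :
  1 < p1 -> p4 <= n -> ~ pattern_at f p1 p2 p3 p4.
Proof. by move=> p1_gt p4_le /(f_span (ltnW p1_gt) p4_le) []; lia. Qed.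

Lemma no_pattern_before_last p1 p2 p3 p4 :
  1 <= p1 -> p4 < n -> ~ pattern_at f p1 p2 p3 p4.
Proof. by move=> p1_ge p4_lt /(f_span p1_ge (ltnW p4_lt)) []; lia. Qed.

Lemma interior_value x : 1 < x < n -> f x <> a /\ f x <> d.
Proof.
by move=> x_int; split=> /(iota_perm_inj f_perm); lia.
Qed.

Variables p2 p3 : nat.
Hypotheses (a_lt_d : a < d) (p2_lt_p3 : 1 < p2 < p3) (p3_lt_n : p3 < n)
           (big_p2 : d < f p2) (small_p3 : f p3 < a).

Lemma no_big_small_big x y z : 1 < x < y -> y < z < n ->
  d < f x -> f y < a -> d < f z -> False.
Proof.
move=> xy yz big_x small_y big_z.
have fx_ne_fz : f x <> f z by move/(iota_perm_inj f_perm); lia.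
case: (ltngtP (f x) (f z)) => [fx_lt_fz|fz_lt_fx|//].
- by apply: (@no_pattern_after_first x y z n); rewrite /pattern_at /forbidden; lia.
- by apply: (@no_pattern_before_last 1 x y z); rewrite /pattern_at /forbidden; lia.
Qed.

Lemma no_small_big_small x y z : 1 < x < y -> y < z < n ->
  f x < a -> d < f y -> f z < a -> False.
Proof.
move=> xy yz small_x big_y small_z.
have fx_ne_fz : f x <> f z by move/(iota_perm_inj f_perm); lia.
case: (ltngtP (f x) (f z)) => [fx_lt_fz|fz_lt_fx|//].
- by apply: (@no_pattern_before_last 1 x y z); rewrite /pattern_at /forbidden; lia.
- by apply: (@no_pattern_after_first x y z n); rewrite /pattern_at /forbidden; lia.
Qed.

Lemma no_small_before_big x y : 1 < x < y -> y < n -> f x < a -> d < f y -> False.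
Proof.
move=> xy y_lt small_x big_y.
case: (ltngtP x p2) => [x_lt_p2|p2_lt_x|x_eq_p2].
- by apply: (@no_small_big_small x p2 p3); lia.
- by apply: (@no_big_small_big p2 x y); lia.
- by rewrite x_eq_p2 in small_x; lia.
Qed.

Lemma no_middle_before_big x y : 1 < x < y -> y < n ->
  a < f x < d -> d < f y -> False.
Proof.
move=> xy y_lt middle_x big_y.
case: (ltngtP y p3) => [y_lt_p3|p3_lt_y|y_eq_p3].
- by apply: (@no_pattern_after_first x y p3 n); rewrite /pattern_at /forbidden; lia.
- by apply: (@no_small_before_big p3 y); lia.
- by rewrite y_eq_p3 in big_y; lia.
Qed.

Lemma no_small_before_middle x y : 1 < x < y -> y < n ->
  f x < a -> a < f y < d -> False.
Proof.
move=> xy y_lt small_x middle_y.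
case: (ltngtP x p2) => [x_lt_p2|p2_lt_x|x_eq_p2].
- by apply: (@no_small_before_big x p2); lia.
- by apply: (@no_pattern_before_last 1 p2 x y); rewrite /pattern_at /forbidden; lia.
- by rewrite x_eq_p2 in small_x; lia.
Qed.

Lemma big_interior x : 1 <= x <= n -> d < f x -> 1 < x < n.
Proof.
move=> x_in big_x; case: (ltngtP x 1) => [|x_gt1|x_eq1]; [lia| |by subst; lia].
by case: (ltngtP x n) => [| |x_eqn]; [lia|lia|by subst; lia].
Qed.

Lemma small_interior x : 1 <= x <= n -> f x < a -> 1 < x < n.
Proof.
move=> x_in small_x; case: (ltngtP x 1) => [|x_gt1|x_eq1]; [lia| |by subst; lia].
by case: (ltngtP x n) => [| |x_eqn]; [lia|lia|by subst; lia].
Qed.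

Lemma big_prefix_closed x y : 1 < y <= x -> x < n -> d < f x -> d < f y.
Proof.
move=> yx x_lt big_x; case: (ltngtP y x) => [y_lt_x||->//]; last lia.
have [fy_ne_a fy_ne_d] : f y <> a /\ f y <> d by apply: interior_value; lia.
case: (ltngtP (f y) a) => [small_y|a_lt_fy|//].
- by case: (@no_small_before_big y x); lia.
- case: (ltngtP (f y) d) => [middle_y|//|//].
  by case: (@no_middle_before_big y x); lia.
Qed.

Lemma small_suffix_closed x y : 1 < x <= y -> y < n -> f x < a -> f y < a.
Proof.
move=> xy y_lt small_x; case: (ltngtP x y) => [x_lt_y||<-//]; last lia.
have [fy_ne_a fy_ne_d] : f y <> a /\ f y <> d by apply: interior_value; lia.
case: (ltngtP (f y) d) => [fy_lt_d|big_y|//].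
- case: (ltngtP (f y) a) => [//|a_lt_fy|//].
  by case: (@no_small_before_middle x y); lia.
- by case: (@no_small_before_big x y); lia.
Qed.

Lemma ends_range : 1 <= a <= n /\ 1 <= d <= n.
Proof. by split; apply: (iota_perm_range f_perm); lia. Qed.

Lemma count_big : count (fun x => d < f x) (iota 1 n) = n - d.
Proof. by rewrite (count_iota_perm_gt f_perm) //; have := ends_range; lia. Qed.

Lemma count_small : count (fun x => f x < a) (iota 1 n) = a - 1.
Proof. by rewrite (count_iota_perm_lt f_perm) //; have := ends_range; lia. Qed.

Lemma big_prefix i : 2 <= i <= n + 1 - d -> d < f i.
Proof.
move=> i_in; have ends := ends_range; rewrite ltnNge; apply/negP => fi_le_d.
have bigs_before : {in iota 1 n, subpred (fun x => d < f x) (fun x => 2 <= x < i)}.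
  move=> x; rewrite mem_iota => x_in big_x; have x_int := big_interior _ big_x.
  rewrite /= ltnNge; apply/andP; split; first lia.
  by apply/negP => i_le_x; have := @big_prefix_closed x i; lia.
have := sub_in_count bigs_before; rewrite count_big count_iota_range; lia.
Qed.

Lemma small_suffix i : n - a + 1 <= i <= n - 1 -> f i < a.
Proof.
move=> i_in; have ends := ends_range; rewrite ltnNge; apply/negP => a_le_fi.
have smalls_after : {in iota 1 n, subpred (fun x => f x < a) (fun x => i < x < n)}.
  move=> x; rewrite mem_iota => x_in small_x; have x_int := small_interior _ small_x.
  rewrite /= ltnNge; apply/andP; split; last lia.
  by apply/negP => x_le_i; have := @small_suffix_closed x i; lia.
have := sub_in_count smalls_after; rewrite count_small count_iota_range; lia.
Qed.

Lemma middle_window i : n + 2 - d <= i <= n - a -> a < f i < d.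
Proof.
move=> i_in; have ends := ends_range.
have [fi_ne_a fi_ne_d] : f i <> a /\ f i <> d by apply: interior_value; lia.
have not_small : ~ f i < a.
  move=> small_i.
  have smalls : {in iota 1 n, subpred (fun x => i <= x < n) (fun x => f x < a)}.
    by move=> x _ x_in; apply: (@small_suffix_closed i); lia.
  by have := sub_in_count smalls; rewrite count_small count_iota_range; lia.
have not_big : ~ d < f i.
  move=> big_i.
  have bigs : {in iota 1 n, subpred (fun x => 2 <= x < i.+1) (fun x => d < f x)}.
    by move=> x _ x_in; apply: (@big_prefix_closed i); lia.
  by have := sub_in_count bigs; rewrite count_big count_iota_range; lia.
lia.
Qed.

End AscendingShape.

Lemma ascending_shape n (f : nat -> nat) :
  perm_eq (map f (iota 1 n)) (iota 1 n) -> patterns_span n f -> has_pattern n f ->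
  f 1 < f n ->
     (forall i, 2 <= i <= n + 1 - f n -> f i > f n) /\
     (forall i, n + 2 - f n <= i <= n - f 1 -> f 1 < f i < f n) /\
     (forall i, n - f 1 + 1 <= i <= n - 1 -> f i < f 1).
Proof.
move=> f_perm f_span [p1 [p2 [p3 [p4 [p1_ge p4_le pat]]]]] a_lt_d.
have [p1_eq p4_eq] := f_span _ _ _ _ p1_ge p4_le pat; subst p1 p4.
have [ord witness] := pat.
have [small_p3 big_p2] : f p3 < f 1 /\ f n < f p2 by move: witness; rewrite /forbidden; lia.
have p2_lt_p3 : 1 < p2 < p3 by lia.
have p3_lt_n : p3 < n by lia.
split; [|split] => i i_in.
- exact: (big_prefix f_perm f_span a_lt_d p2_lt_p3 p3_lt_n big_p2 small_p3).
- exact: (middle_window f_perm f_span a_lt_d p2_lt_p3 p3_lt_n big_p2 small_p3).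
- exact: (small_suffix f_perm f_span a_lt_d p2_lt_p3 p3_lt_n big_p2 small_p3).
Qed.

Lemma descending_shape n (f : nat -> nat) :
  perm_eq (map f (iota 1 n)) (iota 1 n) -> patterns_span n f -> has_pattern n f ->
  f 1 > f n ->
     (forall i, 2 <= i <= f n -> f i < f n) /\
     (forall i, f n + 1 <= i <= f 1 - 1 -> f n < f i < f 1) /\
     (forall i, f 1 <= i <= n - 1 -> f i > f 1).
Proof.
move=> f_perm f_span f_pat d_lt_a.
have n_ge1 : 1 <= n by case: f_pat => p1 [p2 [p3 [p4 [? ? [ord _]]]]]; lia.
have range := iota_perm_range f_perm.
have := range 1; have := range n; rewrite leqnn n_ge1 /= => d_in a_in.
have compl_lt : complement n f 1 < complement n f n by rewrite /complement; lia.
have [big_prefix [middle_window small_suffix]] :=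
  ascending_shape (complement_perm f_perm) (patterns_span_complement f_perm f_span)
                  (has_pattern_complement f_perm f_pat) compl_lt.
rewrite /complement in big_prefix middle_window small_suffix.
split; [|split] => i i_in; have := range i.
- by have := big_prefix i; lia.
- by have := middle_window i; lia.
- by have := small_suffix i; lia.
Qed.

Lemma separable_map (h : nat -> nat) (s : seq nat) :
  {in s &, {homo h : x y / x < y}} -> separable (map h s) -> separable s.
Proof.
move=> h_mono sep_hs [i1 [i2 [i3 [i4 [[i12 i23 i34 i4_lt] pat]]]]]; apply: sep_hs.
exists i1, i2, i3, i4; rewrite size_map; split=> //=.
have in_s k : k <= i4 -> nth 0 s k \in s.
  by move=> k_le; apply/mem_nth/(leq_ltn_trans k_le).
have mono k l : k <= i4 -> l <= i4 -> nth 0 s k < nth 0 s l ->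
    nth 0 (map h s) k < nth 0 (map h s) l.
  move=> k_le l_le; rewrite !(nth_map 0) ?(leq_ltn_trans _ i4_lt) //.
  exact: h_mono (in_s k k_le) (in_s l l_le).
by move: pat => /= [[/andP[bd da] ac]|[/andP[ca ad] db]]; [left|right];
  rewrite !mono //; lia.
Qed.

Lemma count_lt_mono (s : seq nat) x y : x \in s -> x < y ->
  count (fun z => z < x) s < count (fun z => z < y) s.
Proof.
move=> x_in x_lt_y; elim: s x_in => //= z s IH; rewrite inE => /predU1P[<-|x_in].
  rewrite ltnn x_lt_y add1n ltnS; apply: sub_count => z' /= z'_lt; exact: ltn_trans x_lt_y.
rewrite -addnS; apply: leq_add (IH x_in).
by case: ltnP => // z_lt_x; rewrite (ltn_trans z_lt_x x_lt_y).
Qed.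

Lemma separable_std (s : seq nat) : separable (std s) -> separable s.
Proof.
move=> sep; apply: (separable_map _ sep) => x y x_in _ x_lt_y.
by rewrite ltnS; exact: count_lt_mono.
Qed.

Lemma separable_map_iota (f : nat -> nat) a k p1 p2 p3 p4 :
  separable (map f (iota a k)) -> a <= p1 -> p4 < a + k -> ~ pattern_at f p1 p2 p3 p4.
Proof.
move=> sep a_le p4_lt [ord pat]; apply: sep.
exists (p1 - a), (p2 - a), (p3 - a), (p4 - a); rewrite size_map size_iota.
split; first by split; lia.
have nth_f p : a <= p < a + k -> nth 0 (map f (iota a k)) (p - a) = f p.
  by move=> p_in; rewrite (nth_map 0) ?size_iota ?nth_iota ?subnKC //; lia.
by rewrite /= !nth_f //; lia.
Qed.

Definition gens_but (n k : nat) : {set 'I_n.-1} := [set j : 'I_n.-1 | j.+1 != k].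

Lemma inJ_gens_but n k p : inJ (gens_but n k) p = (0 < p < n) && (p != k).
Proof.
apply/existsP/idP => [[j /andP[]]|/andP[p_in p_ne_k]].
  by rewrite inE => jk /eqP <-; rewrite jk andbT; have := ltn_ord j; lia.
have j_lt : p.-1 < n.-1 by lia.
by exists (Ordinal j_lt); rewrite inE /= prednK ?p_ne_k ?eqxx //; lia.
Qed.

Lemma gens_but_proper n k : 0 < k < n -> gens_but n k != setT.
Proof.
move=> k_in; have j_lt : k.-1 < n.-1 by lia.
apply/eqP => J_full; have := in_setT (Ordinal j_lt).
by rewrite -J_full inE /= prednK ?eqxx //; lia.
Qed.

Lemma is_block_gens_but_l n k : 0 < k < n -> is_block (gens_but n k) 1 k.
Proof.
move=> k_in; split=> [|p p_in]; rewrite ?inJ_gens_but; last lia.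
by apply/and5P; split; rewrite ?inJ_gens_but //; lia.
Qed.

Lemma is_block_gens_but_r n k : 0 < k < n -> is_block (gens_but n k) k.+1 n.
Proof.
move=> k_in; split=> [|p p_in]; rewrite ?inJ_gens_but; last lia.
by apply/and5P; split; rewrite ?inJ_gens_but //; lia.
Qed.

Lemma wblock_pattern_free n (w : 'S_n) (J : {set 'I_n.-1}) a b p1 p2 p3 p4 :
  parabolic_separable w J -> is_block J a b -> a <= p1 -> p4 <= b ->
  ~ pattern_at (wv w) p1 p2 p3 p4.
Proof.
move=> sepJ blk a_le p4_le; have [/and5P[_ a_le_b _ _ _] _] := blk.
by apply: separable_map_iota (separable_std (sepJ a b blk)) a_le _; lia.
Qed.

Lemma min_nonseparable_patterns_span n (w : 'S_n) :
  min_nonseparable w -> patterns_span n (wv w).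
Proof.
move=> [_ minJ] p1 p2 p3 p4 p1_ge p4_le pat; have [ord _] := pat.
have sep k : 0 < k < n -> parabolic_separable w (gens_but n k).
  by move=> k_in; apply/minJ/gens_but_proper.
split; apply/eqP; apply: contraT => p_ne.
- have k_in : 0 < 1 < n by lia.
  by case: (wblock_pattern_free (sep 1 k_in) (is_block_gens_but_r k_in) _ p4_le pat); lia.
- have k_in : 0 < n.-1 < n by lia.
  by case: (wblock_pattern_free (sep _ k_in) (is_block_gens_but_l k_in) p1_ge _ pat); lia.
Qed.

Lemma perm_map_enum (T : finType) (s : {perm T}) : perm_eq (map s (enum T)) (enum T).
Proof.
apply: uniq_perm => [||x]; first by rewrite (map_inj_uniq (@perm_inj _ s)) enum_uniq.
  exact: enum_uniq.
by rewrite -[x in LHS](permKV s) (mem_map (@perm_inj _ s)) !mem_enum.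
Qed.

Lemma wv_perm n (w : 'S_n) : perm_eq (map (wv w) (iota 1 n)) (iota 1 n).
Proof.
have size_w : size (wseq w) = n by rewrite size_map size_enum_ord.
have -> : map (wv w) (iota 1 n) = wseq w.
  rewrite (iotaDl 1 0) -map_comp (@eq_map _ _ _ (nth 0 (wseq w))) => [|i] //.
  by rewrite map_nth_iota0 ?take_oversize ?size_w.
have -> : wseq w = map (succn \o val) (map w (enum 'I_n)) by rewrite -map_comp.
apply: perm_trans (perm_map _ (perm_map_enum w)) _.
by rewrite map_comp val_enum_ord (iotaDl 1 0).
Qed.

Lemma nonseparable_has_pattern n (w : 'S_n) : ~ separable (wseq w) -> has_pattern n (wv w).
Proof.
move=> nonsep; apply: NNPP => no_pat; apply: nonsep.
move=> [i1 [i2 [i3 [i4 [[i12 i23 i34 i4_lt] pat]]]]]; apply: no_pat.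
rewrite size_map size_enum_ord in i4_lt.
by exists i1.+1, i2.+1, i3.+1, i4.+1; split; [|lia|split; [rewrite !ltnS i12 i23 i34|]].
Qed.

Theorem lemma6p3 (n : nat) (w : 'S_n) :
  min_nonseparable w ->
  (wv w 1 < wv w n ->
     (forall i, 2 <= i <= n + 1 - wv w n -> wv w i > wv w n) /\
     (forall i, n + 2 - wv w n <= i <= n - wv w 1 -> wv w 1 < wv w i < wv w n) /\
     (forall i, n - wv w 1 + 1 <= i <= n - 1 -> wv w i < wv w 1)) /\
  (wv w 1 > wv w n ->
     (forall i, 2 <= i <= wv w n -> wv w i < wv w n) /\
     (forall i, wv w n + 1 <= i <= wv w 1 - 1 -> wv w n < wv w i < wv w 1) /\
     (forall i, wv w 1 <= i <= n - 1 -> wv w i > wv w 1)).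
Proof.
move=> min_w; have [nonsep _] := min_w.
have w_perm := wv_perm w.
have w_span := min_nonseparable_patterns_span min_w.
have w_pat := nonseparable_has_pattern nonsep.
split; [exact: ascending_shape | exact: descending_shape].
Qed.
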